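(* Let $\beta\ne0$, and consider the episodic MDP with finite state space, tabular deterministic policy $\mu_\theta(s)=\theta_s$, soft value functions $V^\beta_{\mu_\theta},Q^\beta_{\mu_\theta}$ and behavior state weights $\rho_b$ as in the context. Define $g(\mu_\theta)$ as the parameter vector whose block for state $s$ is $$g(\mu_\theta)_s=\rho_b(s)\,\nabla_aQ^\beta_{\mu_\theta}(s,a)\big|_{a=\mu_\theta(s)}\in\mathbb{R}^m$$ (i.e. $g(\mu_\theta)=\sum_{s}\rho_b(s)\nabla_\theta\mu_\theta(s)\nabla_aQ^\beta_{\mu_\theta}(s,a)|_{a=\mu_\theta(s)}$), and let $\theta'=\theta+\alpha\,g(\mu_\theta)$. Then there exists $\epsilon>0$ such that for all $0<\alpha<\epsilon$, $$V^\beta_{\mu_\theta}(s)\le V^\beta_{\mu_{\theta'}}(s)\qquad\text{for all }s\in\mathcal S.$$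
   Context: Episodic MDP: finite state space $\mathcal S$, action space $\mathcal A=\mathbb{R}^m$, transition probabilities $p(s'|s,a)$ (a probability mass function on $\mathcal S$ for each $(s,a)$) and reward $r(s,a)$, with $a\mapsto p(s'|s,a)$ and $a\mapsto r(s,a)$ continuously differentiable. There is a set $\mathcal S_{\rm term}\subset\mathcal S$ of absorbing terminal states with $r(s,a)=0$ and $p(\mathcal S_{\rm term}|s,a)=1$ for $s\in\mathcal S_{\rm term}$, and an integer $T$ such that from any state, under any sequence of actions, the state lies in $\mathcal S_{\rm term}$ after at most $T$ transitions with probability 1. Tabular (linear) deterministic policy: $\theta=(\theta_s)_{s\in\mathcal S}$ with $\theta_s\in\mathbb{R}^m$ and $\mu_\theta(s)=\theta_s$. Soft value functions of a deterministic policy $\mu$: $V^\beta_\mu(s)=\frac1\beta\log\mathbb{E}\big[e^{\beta\sum_{t\ge1}r_t}\mid s_1=s\big]$ and $Q^\beta_\mu(s,a)=\frac1\beta\log\mathbb{E}\big[e^{\beta\sum_{t\ge1}r_t}\mid s_1=s,a_1=a\big]$, where $a_t=\mu(s_t)$ for $t\ge2$ (and $t\ge1$ for $V$); the sums are a.s. finite. They satisfy $V^\beta_\mu(s)=Q^\beta_\mu(s,\mu(s))$ and $Q^\beta_\mu(s,a)=r(s,a)+\frac1\beta\log\sum_{s'}p(s'|s,a)e^{\beta V^\beta_\mu(s')}$. $\rho_b:\mathcal S\to[0,\infty)$ is the state distribution of an arbitrary behavior policy (any nonnegative weights). *)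

From HB Require Import structures.
From mathcomp Require Import all_boot all_order all_algebra.
From mathcomp Require Import all_classical all_reals all_analysis.
Set Implicit Arguments. Unset Strict Implicit. Unset Printing Implicit Defensive.
Import Order.TTheory GRing.Theory Num.Theory.
Import numFieldNormedType.Exports.
Local Open Scope ring_scope.

Section MDP.
Variables (R : realType) (S : finType) (m T : nat).

Definition C1 (f : 'rV[R]_m -> R) : Prop :=
  (forall a, differentiable f a) /\ (forall v : 'rV[R]_m, continuous (fun a => 'D_v f a)).

Definition path_act (mu : S -> 'rV[R]_m) (a1 : 'rV[R]_m)
  (w : {ffun 'I_T.+1 -> S}) (i : 'I_T.+1) : 'rV[R]_m :=
  if val i == 0%N then a1 else mu (w i).

(* E[ exp(beta * sum_{t>=1} r_t) | s_1 = s, a_1 = a1 ], a_t = mu(s_t) for t >= 2,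
   written as the finite sum over all state paths s_1..s_{T+1} (after at most T
   transitions the chain is in an absorbing zero-reward terminal state, so
   the rewards beyond time T+1 vanish). *)
Definition exp_return (p : S -> 'rV[R]_m -> S -> R) (r : S -> 'rV[R]_m -> R)
  (beta : R) (mu : S -> 'rV[R]_m) (s : S) (a1 : 'rV[R]_m) : R :=
  \sum_(w : {ffun 'I_T.+1 -> S} | w ord0 == s)
     ((\prod_(t < T) p (w (widen_ord (leqnSn T) t))
                       (path_act mu a1 w (widen_ord (leqnSn T) t))
                       (w (lift ord0 t)))
      * expR (beta * \sum_(i < T.+1) r (w i) (path_act mu a1 w i))).

Definition Qsoft p r beta mu s a : R := ln (exp_return p r beta mu s a) / beta.
Definition Vsoft p r beta mu s : R := Qsoft p r beta mu s (mu s).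

Definition gradQ p r beta mu s (a : 'rV[R]_m) : 'rV[R]_m :=
  \row_(j < m) 'D_(delta_mx 0 j) (Qsoft p r beta mu s) a.

Definition mu_of (theta : S -> 'rV[R]_m) : S -> 'rV[R]_m := theta.

Definition gpg p r beta (rho : S -> R) (theta : S -> 'rV[R]_m) (s : S) : 'rV[R]_m :=
  rho s *: gradQ p r beta (mu_of theta) s (mu_of theta s).

End MDP.

From HB Require Import structures.
From mathcomp Require Import all_boot all_order all_algebra.
From mathcomp Require Import all_classical all_reals all_analysis.
From mathcomp Require Import ring.
Import Order.TTheory GRing.Theory Num.Theory.
Import numFieldNormedType.Exports.
Set Implicit Arguments. Unset Strict Implicit. Unset Printing Implicit Defensive.
Local Open Scope ring_scope.

(* Write exp(beta Q) and exp(beta V) through the soft Bellman backup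
   [expQ c s a = exp(beta r(s,a)) * sum_s' p(s'|s,a) c(s')], which is linear with
   nonnegative coefficients in the continuation [c], hence monotone for the order
   [beta (x - y) >= 0] under which [ln _ / beta] is increasing.  The directional
   derivative of [Q(s, .)] along [rho(s) grad Q] is [rho(s) |grad Q|^2 >= 0], so for
   small steps the new action improves [Q(s, .)] at every one of the finitely many
   states.  As in the policy improvement theorem, this one-step improvement
   propagates through the backup by induction on the number of transitions left
   before absorption, which is at most [T]. *)

Section Paths.
Variables (R : realType) (S : finType) (m : nat).
Variables (p : S -> 'rV[R]_m -> S -> R) (r : S -> 'rV[R]_m -> R) (beta : R).

Definition path_weight n (mu : S -> 'rV[R]_m) a1 (w : {ffun 'I_n.+1 -> S}) : R :=
  (\prod_(t < n) p (w (widen_ord (leqnSn n) t))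
                   (path_act mu a1 w (widen_ord (leqnSn n) t)) (w (lift ord0 t)))
  * expR (beta * \sum_(i < n.+1) r (w i) (path_act mu a1 w i)).

Lemma exp_returnE n mu s a :
  exp_return n p r beta mu s a = \sum_(w : {ffun 'I_n.+1 -> S} | w ord0 == s) path_weight mu a w.
Proof. by []. Qed.

Definition path_cons n (s : S) (w : {ffun 'I_n.+1 -> S}) : {ffun 'I_n.+2 -> S} :=
  [ffun i => if unlift ord0 i is Some j then w j else s].

Lemma path_cons0 n s w : @path_cons n s w ord0 = s.
Proof. by rewrite ffunE unlift_none. Qed.

Lemma path_consS n s w (j : 'I_n.+1) : path_cons s w (lift ord0 j) = w j.
Proof. by rewrite ffunE liftK. Qed.

Lemma sum_paths_from n s (F : {ffun 'I_n.+2 -> S} -> R) :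
  \sum_(w : {ffun 'I_n.+2 -> S} | w ord0 == s) F w = \sum_(w : {ffun 'I_n.+1 -> S}) F (path_cons s w).
Proof.
rewrite (reindex_onto (path_cons s) (fun w => [ffun j => w (lift ord0 j)])) /=.
  apply: eq_bigl => w; rewrite path_cons0 eqxx /=.
  by apply/eqP/ffunP => j; rewrite ffunE path_consS.
move=> w /eqP w0; apply/ffunP => i; rewrite ffunE.
by case: unliftP => [j ->|->]; rewrite ?ffunE.
Qed.

Lemma path_act_head n (mu : S -> 'rV[R]_m) (w : {ffun 'I_n.+1 -> S}) i :
  path_act mu (mu (w ord0)) w i = mu (w i).
Proof.
by rewrite /path_act; case: eqP => // i0; congr (mu (w _)); apply: val_inj.
Qed.

Lemma path_weight_cons n mu a s (w : {ffun 'I_n.+1 -> S}) :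
  path_weight mu a (path_cons s w) =
  expR (beta * r s a) * p s a (w ord0) * path_weight mu (mu (w ord0)) w.
Proof.
have act0 : path_act mu a (path_cons s w) ord0 = a by [].
have actS i : path_act mu a (path_cons s w) (lift ord0 i) = path_act mu (mu (w ord0)) w i.
  by rewrite path_act_head /path_act /= path_consS.
rewrite /path_weight big_ord_recl big_ord_recl.
have -> : widen_ord (leqnSn n.+1) ord0 = ord0 by apply: val_inj.
rewrite act0 path_cons0 path_consS.
under eq_bigr => t _.
  have -> : widen_ord (leqnSn n.+1) (lift ord0 t) = lift ord0 (widen_ord (leqnSn n) t).
    by apply: val_inj.
  rewrite actS !path_consS.
  over.
under [in expR _]eq_bigr do rewrite actS path_consS.
by rewrite mulrDr expRD; ring.
Qed.
End Paths.

Definition soft_ge (R : realType) (beta x y : R) := 0 <= beta * (x - y).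

Lemma soft_ge_trans (R : realType) (beta y x z : R) :
  soft_ge beta x y -> soft_ge beta y z -> soft_ge beta x z.
Proof.
by rewrite /soft_ge => ? ?; rewrite -(subrKA y) mulrDr addrC addr_ge0.
Qed.

Lemma ler_ln_div (R : realType) (beta x y : R) : beta != 0 -> 0 < x -> 0 < y ->
  (ln y / beta <= ln x / beta) = soft_ge beta x y.
Proof.
move=> beta_neq0 x_gt0 y_gt0; rewrite /soft_ge.
have [beta_lt0|beta_gt0|/eqP] := ltgtP beta 0; last by rewrite (negbTE beta_neq0).
  by rewrite ler_nM2r ?invr_lt0 // ler_ln ?posrE // nmulr_rge0 // subr_le0.
by rewrite ler_pM2r ?invr_gt0 // ler_ln ?posrE // pmulr_rge0 // subr_ge0.
Qed.

Section SoftBellman.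
Variables (R : realType) (S : finType) (m : nat).
Variables (p : S -> 'rV[R]_m -> S -> R) (r : S -> 'rV[R]_m -> R) (beta : R).

(* With [c = exp (beta V)] on next states, [expQ c s a = exp (beta Q(s, a))];
   [expV n mu] is [exp (beta V_mu)] for a horizon of [n] transitions. *)
Definition expQ (c : S -> R) s a : R :=
  expR (beta * r s a) * \sum_(s' : S) p s a s' * c s'.

Fixpoint expV n (mu : S -> 'rV[R]_m) : S -> R :=
  if n is n'.+1 then fun s => expQ (expV n' mu) s (mu s) else fun=> 1.

Lemma exp_return_S n mu s a :
  exp_return n.+1 p r beta mu s a =
  expQ (fun s' => exp_return n p r beta mu s' (mu s')) s a.
Proof.
rewrite exp_returnE sum_paths_from /expQ mulr_sumr.
rewrite (partition_big (fun w : {ffun 'I_n.+1 -> S} => w ord0) xpredT) //=.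
apply: eq_bigr => s' _; rewrite exp_returnE mulrA mulr_sumr.
by apply: eq_bigr => w /eqP w0; rewrite path_weight_cons w0.
Qed.

Hypothesis psum : forall s a, \sum_(s' : S) p s a s' = 1.

Lemma exp_return_expQ n mu s a :
  exp_return n p r beta mu s a = expQ (expV n mu) s a.
Proof.
elim: n s a => [|n IH] s a; last first.
  by rewrite exp_return_S; congr expQ; apply/funext => s'; rewrite IH.
rewrite exp_returnE (big_pred1 [ffun=> s]); last first.
  move=> w /=; apply/eqP/eqP => [w0|->]; last by rewrite ffunE.
  by apply/ffunP => i; rewrite ffunE (ord1 i).
rewrite /path_weight big_ord0 mul1r big_ord1 ffunE /expQ /=.
by under eq_bigr do rewrite mulr1; rewrite psum mulr1.
Qed.

Hypothesis pge0 : forall s a s', 0 <= p s a s'.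

Lemma expQ_gt0 (c : S -> R) s a : (forall s', 0 < c s') -> 0 < expQ c s a.
Proof.
move=> c_gt0; rewrite /expQ mulr_gt0 ?expR_gt0 //.
have pc_ge0 s' : 0 <= p s a s' * c s' by rewrite mulr_ge0 ?pge0 ?ltW.
rewrite lt_def sumr_ge0 ?andbT // psumr_neq0 //.
have := oner_neq0 R; rewrite -(psum s a) psumr_neq0 // => /hasP [s' s's /andP [_ ps']].
by apply/hasP; exists s' => //; rewrite mulr_gt0.
Qed.

Lemma expV_gt0 n mu s : 0 < expV n mu s.
Proof. by elim: n s => //= n IH s; apply: expQ_gt0. Qed.

Lemma eq_expQ_support (c c' : S -> R) s a :
  (forall s', 0 < p s a s' -> c s' = c' s') -> expQ c s a = expQ c' s a.
Proof.
move=> eq_cc'; rewrite /expQ; congr (_ * _); apply: eq_bigr => s' _.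
have [->|p_neq0] := eqVneq (p s a s') 0; first by rewrite !mul0r.
by rewrite eq_cc' // lt_def p_neq0 pge0.
Qed.

Lemma expQ_soft_ge (c c' : S -> R) s a :
  (forall s', 0 < p s a s' -> soft_ge beta (c' s') (c s')) ->
  soft_ge beta (expQ c' s a) (expQ c s a).
Proof.
move=> ge_cc'; rewrite /soft_ge /expQ -mulrBr -sumrB mulrCA mulr_ge0 ?expR_ge0 //.
rewrite mulr_sumr sumr_ge0 // => s' _.
have [->|p_neq0] := eqVneq (p s a s') 0; first by rewrite !mul0r subrr mulr0.
by rewrite -mulrBr mulrCA mulr_ge0 //; apply: ge_cc'; rewrite lt_def p_neq0 pge0.
Qed.

Variable Sterm : {set S}.
Hypothesis r_term : forall s a, s \in Sterm -> r s a = 0.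
Hypothesis p_term : forall s a, s \in Sterm -> \sum_(s' in Sterm) p s a s' = 1.

Lemma p_leave_term s a s' : s \in Sterm -> s' \notin Sterm -> p s a s' = 0.
Proof.
move=> s_term s'_nterm; have := psum s a.
rewrite (bigID (mem Sterm)) /= p_term // -[RHS]addr0 => /addrI /psumr_eq0P.
by apply.
Qed.

Lemma expQ_term (c : S -> R) s a :
  s \in Sterm -> {in Sterm, forall s', c s' = 1} -> expQ c s a = 1.
Proof.
move=> s_term c_term; rewrite /expQ r_term // mulr0 expR0 mul1r -(psum s a).
apply: eq_bigr => s' _; have [/c_term ->|s'_nterm] := boolP (s' \in Sterm).
  by rewrite mulr1.
by rewrite p_leave_term // mul0r.
Qed.

Lemma expV_term n mu s : s \in Sterm -> expV n mu s = 1.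
Proof. by elim: n s => //= n IH s s_term; apply: expQ_term. Qed.

Fixpoint absorbed j s : Prop :=
  if j is j'.+1 then forall a s', 0 < p s a s' -> absorbed j' s' else s \in Sterm.

Lemma absorbed_of_paths j s :
  (forall (f : nat -> S) (g : nat -> 'rV[R]_m), f 0%N = s ->
     (forall t, (t < j)%N -> 0 < p (f t) (g t) (f t.+1)) -> f j \in Sterm) ->
  absorbed j s.
Proof.
elim: j s => [|j IH] s paths_term /=; first exact: (paths_term (fun=> s) (fun=> 0)).
move=> a s' ps'; apply: IH => f g f0 f_pos.
apply: (paths_term (fun t => if t is t'.+1 then f t' else s)
                   (fun t => if t is t'.+1 then g t' else a)) => // -[|t] /= ?.
  by rewrite f0.
exact: f_pos.
Qed.

Lemma absorbed_everywhere T :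
  (forall (w : {ffun 'I_T.+1 -> S}) (a : 'I_T -> 'rV[R]_m),
     (forall t : 'I_T, 0 < p (w (widen_ord (leqnSn T) t)) (a t) (w (lift ord0 t))) ->
     w ord_max \in Sterm) ->
  forall s, absorbed T s.
Proof.
move=> paths_term s; apply: absorbed_of_paths => f g _ f_pos.
have := paths_term [ffun i : 'I_T.+1 => f i] (fun t => g t); rewrite ffunE.
by apply=> t; rewrite !ffunE /= /bump add1n; exact: f_pos.
Qed.

Lemma expQ_expV_absorbed j k mu s a :
  absorbed j s -> expQ (expV (j + k) mu) s a = expQ (expV j mu) s a.
Proof.
elim: j s a => [|j IH] s a /= abs_s.
  by rewrite !expQ_term // => s' s'_term; rewrite expV_term.
by apply: eq_expQ_support => s' ps'; apply: IH; apply: abs_s ps'.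
Qed.

Section Improvement.
Variables (T : nat) (mu mu' : S -> 'rV[R]_m).
Hypothesis improves_step : forall s,
  soft_ge beta (expQ (expV T mu) s (mu' s)) (expQ (expV T mu) s (mu s)).

Lemma expV_improve j s : (j <= T)%N -> absorbed j s ->
  soft_ge beta (expV j.+1 mu' s) (expV j.+1 mu s).
Proof.
elim: j s => [|j IH] s le_jT abs_s.
  by rewrite /soft_ge !expV_term // subrr mulr0.
apply: (@soft_ge_trans _ _ (expQ (expV j.+1 mu) s (mu' s))).
  by apply: expQ_soft_ge => s' ps'; apply: IH; [exact: ltnW | exact: abs_s ps'].
by have := improves_step s; rewrite -(subnKC le_jT) !expQ_expV_absorbed.
Qed.
End Improvement.
End SoftBellman.

Local Open Scope classical_set_scope.

Section GradientAscent.
Variables (R : realType) (m : nat).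

Definition grad (f : 'rV[R]_m -> R) a : 'rV[R]_m := \row_j 'D_(delta_mx 0 j) f a.

Lemma derive_grad (f : 'rV[R]_m -> R) a : differentiable f a ->
  'D_(grad f a) f a = \sum_j grad f a 0 j ^+ 2.
Proof.
move=> df; rewrite deriveE // {1}(matrix_sum_delta (grad f a)) big_ord1 linear_sum.
apply: eq_bigr => j _; rewrite linearZ /= -deriveE //.
by rewrite [X in _ *: X](_ : _ = grad f a 0 j) ?mxE // expr2.
Qed.

Lemma derive_gt0_near_lt (V : normedModType R) (f : V -> R) a v :
  derivable f a v -> 0 < 'D_v f a -> \forall h \near (0 : R)^', 0 < h -> f a < f (a + h *: v).
Proof.
move=> df D_gt0.
have quot_pos : \forall h \near (0 : R)^', 0 < h^-1 *: ((f \o shift a) (h *: v) - f a).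
  exact: cvgr_gt df _ D_gt0.
near=> h => h_gt0; have hV_gt0 : 0 < h^-1 by rewrite invr_gt0.
rewrite -subr_gt0 -(pmulr_rgt0 _ hV_gt0) [a + _]addrC.
by near: h; exact: quot_pos.
Unshelve. all: by end_near.
Qed.

Lemma gradient_ascent (f : 'rV[R]_m -> R) a c : differentiable f a -> 0 <= c ->
  \forall h \near (0 : R)^', 0 < h -> f a <= f (a + h *: (c *: grad f a)).
Proof.
move=> df c_ge0; have [->|d_neq0] := eqVneq (c *: grad f a) 0.
  by apply: nearW => h _; rewrite scaler0 addr0.
move: (d_neq0); rewrite scaler_eq0 negb_or => /andP [c_neq0 g_neq0].
have sq_gt0 : 0 < \sum_j grad f a 0 j ^+ 2.
  rewrite lt_def sumr_ge0 ?andbT => [|j _]; last exact: sqr_ge0.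
  apply: contraNneq g_neq0 => sum0.
  have g0 := psumr_eq0P (fun k _ => sqr_ge0 (grad f a 0 k)) sum0.
  by apply/eqP/rowP => j; rewrite [RHS]mxE; apply/eqP; rewrite -sqrf_eq0 g0.
have D_gt0 : 0 < 'D_(c *: grad f a) f a.
  by rewrite deriveE // linearZ -deriveE // derive_grad // mulr_gt0 // lt_def c_neq0.
apply: filterS (derive_gt0_near_lt (diff_derivable df) D_gt0) => h lt_fa h_gt0.
exact/ltW/lt_fa.
Qed.

Lemma near_dnbhs0_interval (P : R -> Prop) : (\forall h \near (0 : R)^', P h) ->
  exists2 eps : R, 0 < eps & forall h, 0 < h < eps -> P h.
Proof.
rewrite near_withinE => /nbhs_ballP [eps eps_gt0 P_ball]; exists eps => // h /andP [h_gt0 h_lt].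
by apply: P_ball; rewrite ?gt_eqF // /ball /= sub0r normrN gtr0_norm.
Qed.
End GradientAscent.

Section Smoothness.
Variables (R : realType) (S : finType) (m : nat).
Variables (p : S -> 'rV[R]_m -> S -> R) (r : S -> 'rV[R]_m -> R) (beta : R).

Lemma differentiable_expQ (c : S -> R) s a :
  (forall s', differentiable (fun a => p s a s') a) -> differentiable (r s) a ->
  differentiable (expQ p r beta c s) a.
Proof.
move=> dp dr; apply: differentiableM.
  apply: (@differentiable_comp _ _ _ _ (fun a => beta * r s a) expR).
    exact: differentiableM.
  exact/derivable1_diffP/derivable_expR.
rewrite -(fct_sumE _ _ (fun s' a => p s a s' * c s')).
elim/big_ind: _ => [|f g df dg|s' _]; first exact: differentiable_cst.
  exact: differentiableD.
by apply: differentiableM => //; exact: differentiable_cst.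
Qed.

Hypothesis psum : forall s a, \sum_(s' : S) p s a s' = 1.
Hypothesis pge0 : forall s a s', 0 <= p s a s'.

Lemma QsoftE T mu s :
  Qsoft T p r beta mu s = fun a => ln (expQ p r beta (expV p r beta T mu) s a) / beta.
Proof. by apply/funext => a; rewrite /Qsoft exp_return_expQ. Qed.

Lemma differentiable_Qsoft T mu s a :
  (forall s', differentiable (fun a => p s a s') a) -> differentiable (r s) a ->
  differentiable (Qsoft T p r beta mu s) a.
Proof.
move=> dp dr; rewrite QsoftE; apply: differentiableM; last exact: differentiable_cst.
apply: (differentiable_comp (differentiable_expQ _ dp dr)).
apply/derivable1_diffP; apply: ex_derive; apply: is_derive1_ln.
by apply: expQ_gt0 => // s'; apply: expV_gt0.
Qed.
End Smoothness.

Theorem theorem3 (R : realType) (S : finType) (m T : nat) (Sterm : {set S})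
  (p : S -> 'rV[R]_m -> S -> R) (r : S -> 'rV[R]_m -> R)
  (beta : R) (rho : S -> R) (theta : S -> 'rV[R]_m) :
  beta != 0 ->
  (forall s a s', 0 <= p s a s') ->
  (forall s a, \sum_(s' : S) p s a s' = 1) ->
  (forall s s', C1 (fun a => p s a s')) ->
  (forall s, C1 (r s)) ->
  (forall s a, s \in Sterm -> r s a = 0) ->
  (forall s a, s \in Sterm -> \sum_(s' in Sterm) p s a s' = 1) ->
  (forall (w : {ffun 'I_T.+1 -> S}) (a : 'I_T -> 'rV[R]_m),
     (forall t : 'I_T, 0 < p (w (widen_ord (leqnSn T) t)) (a t) (w (lift ord0 t))) ->
     w ord_max \in Sterm) ->
  (forall s, 0 <= rho s) ->
  exists eps : R, 0 < eps /\
    forall alpha : R, 0 < alpha < eps ->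
      let theta' := fun s => theta s + alpha *: gpg T p r beta rho theta s in
      forall s : S,
        Vsoft T p r beta (mu_of theta) s <= Vsoft T p r beta (mu_of theta') s.
Proof.
move=> beta_neq0 p_ge0 psum p_C1 r_C1 r_term p_term paths_term rho_ge0.
have ascent s : \forall h \near (0 : R)^', 0 < h ->
    Qsoft T p r beta theta s (theta s) <=
    Qsoft T p r beta theta s (theta s + h *: gpg T p r beta rho theta s).
  apply: gradient_ascent (rho_ge0 s).
  by apply: differentiable_Qsoft => // [s'|]; [exact: (p_C1 s s').1 | exact: (r_C1 s).1].
have [eps eps_gt0 ascent_eps] := near_dnbhs0_interval (filter_forall _ ascent).
have expQ_pos n mu s a : 0 < expQ p r beta (expV p r beta n mu) s a.
  by apply: expQ_gt0 => // s'; exact: expV_gt0.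
exists eps; split => // alpha alpha_in theta' s.
have improves_step s' : soft_ge beta (expQ p r beta (expV p r beta T theta) s' (theta' s'))
                                     (expQ p r beta (expV p r beta T theta) s' (theta s')).
  have := ascent_eps alpha alpha_in s' (proj1 (andP alpha_in)).
  by rewrite !(QsoftE _ _ psum) /= ler_ln_div.
rewrite /Vsoft !(QsoftE _ _ psum) /= ler_ln_div //.
exact: (expV_improve psum p_ge0 r_term p_term improves_step (leqnn T) (absorbed_everywhere paths_term s)).
Qed.
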